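(* Let $n>r$ and let $1_r:=1_{(1,\dots,1,0,\dots,0)}$ ($r$ ones followed by $n-r$ zeros). Let $A$ be a $\mathbb{Q}(q)$-algebra and $f\colon\hat S(n,r)\to A$ a surjective $\mathbb{Q}(q)$-algebra homomorphism whose restriction to $1_r\hat S(n,r)1_r$ is injective. Then $f$ is an isomorphism of $\mathbb{Q}(q)$-algebras $\hat S(n,r)\cong A$.
   Context: Fix integers $n\ge3$, $r\ge3$; indices are read modulo $n$. $\hat U=\hat{\mathbf U}_q(\hat{\mathfrak{gl}}_n)$ is the associative unital $\mathbb{Q}(q)$-algebra generated by $R^{\pm1}$, $K_i^{\pm1}$, $E_i$, $E_{-i}$ ($1\le i\le n$) subject to: the $K_i^{\pm1}$ pairwise commute and $K_iK_i^{-1}=K_i^{-1}K_i=1$; $E_iE_{-j}-E_{-j}E_i=\delta_{ij}\frac{K_iK_{i+1}^{-1}-K_i^{-1}K_{i+1}}{q-q^{-1}}$; $K_iE_{\pm j}=q^{\pm(\delta_{i,j}-\delta_{i,j+1})}E_{\pm j}K_i$; for $\epsilon,\delta\in\{1,-1\}$, $E_{\epsilon i}^2E_{\epsilon(i+\delta)}-(q+q^{-1})E_{\epsilon i}E_{\epsilon(i+\delta)}E_{\epsilon i}+E_{\epsilon(i+\delta)}E_{\epsilon i}^2=0$; $E_{\epsilon i}E_{\epsilon j}=E_{\epsilon j}E_{\epsilon i}$ if $j\not\equiv i\pm1\pmod n$; $RR^{-1}=R^{-1}R=1$; $RXR^{-1}=X'$ for $(X,X')\in\{(E_i,E_{i+1}),(E_{-i},E_{-(i+1)}),(K_i^{-1},K_{i+1}^{-1})\}$.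 The coproduct $\Delta$ is the algebra map with $\Delta(E_i)=E_i\otimes K_iK_{i+1}^{-1}+1\otimes E_i$, $\Delta(E_{-i})=K_i^{-1}K_{i+1}\otimes E_{-i}+E_{-i}\otimes1$, $\Delta(K_i^{\pm1})=K_i^{\pm1}\otimes K_i^{\pm1}$, $\Delta(R^{\pm1})=R^{\pm1}\otimes R^{\pm1}$. $V$ is the $\mathbb{Q}(q)$-vector space with basis $\{e_t\}_{t\in\mathbb{Z}}$, a $\hat U$-module via: $E_ie_{t+1}=e_t$ if $i\equiv t\pmod n$ and $0$ otherwise; $E_{-i}e_t=e_{t+1}$ if $i\equiv t\pmod n$ and $0$ otherwise; $K_i^{\pm1}e_t=q^{\pm1}e_t$ if $i\equiv t\pmod n$ and $e_t$ otherwise; $R^{\pm1}e_t=e_{t\pm1}$; $\hat U$ acts on $V^{\otimes r}$ via the iterated coproduct, giving $\psi_{n,r}\colon\hat U\to\mathrm{End}_{\mathbb{Q}(q)}(V^{\otimes r})$. The affine $q$-Schur algebra is $\hat S(n,r):=\psi_{n,r}(\hat U)$ (by affine Schur–Weyl duality this equals the centralizer of the natural right action of the extended affine Hecke algebra of type $\hat A_{r-1}$ on $V^{\otimes r}$). $\Lambda(n,r)=\{\lambda\in\mathbb{N}^n:\sum_i\lambda_i=r\}$; for $\lambda\in\Lambda(n,r)$, $1_\lambda\in\hat S(n,r)$ is the projection of $V^{\otimes r}$ onto the span of those $e_{t_1}\otimes\cdots\otimes e_{t_r}$ with $\#\{j: t_j\equiv i\pmod n\}=\lambda_i$ for all $i$.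 *)

From HB Require Import structures.
From mathcomp Require Import all_boot all_order all_algebra.
Set Implicit Arguments. Unset Strict Implicit. Unset Printing Implicit Defensive.
Import Order.TTheory GRing.Theory Num.Theory.
Local Open Scope ring_scope.

Definition Kq : fieldType := {fraction {poly rat}}.
Definition q : Kq := tofrac ('X : {poly rat}).

Section AffineSchur.
Variables n r : nat.

(* Basis of V^{(x) r}: e_{t_1} (x) ... (x) e_{t_r}, indexed by (t_1..t_r) in Z^r
   (tensor position l+1 <-> l : 'I_r). *)
Definition Idx := {ffun 'I_r -> int}.

(* Vectors of V^{(x)r}: finitely supported coordinate functions. *)
Definition fsupp (v : Idx -> Kq) : Prop :=
  exists s : seq Idx, forall j, j \notin s -> v j = 0.

Record Vec := MkVec { vfun :> Idx -> Kq; vfin : fsupp vfun }.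

Lemma fsupp0 : fsupp (fun _ => 0).
Proof. by exists [::]. Qed.

Lemma fsuppD (u v : Idx -> Kq) : fsupp u -> fsupp v -> fsupp (fun j => u j + v j).
Proof.
move=> [s1 H1] [s2 H2]; exists (s1 ++ s2) => j.
by rewrite mem_cat negb_or => /andP[/H1 -> /H2 ->]; rewrite addr0.
Qed.

Lemma fsuppZ (c : Kq) (v : Idx -> Kq) : fsupp v -> fsupp (fun j => c * v j).
Proof. by move=> [s H]; exists s => j /H ->; rewrite mulr0. Qed.

Lemma fsupp_mono (c : Idx -> Kq) (tau tau' : Idx -> Idx) :
  cancel tau tau' -> forall v, fsupp v -> fsupp (fun j => c j * v (tau j)).
Proof.
move=> H v [s Hs]; exists (map tau' s) => j Hj; rewrite Hs ?mulr0 //.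
by apply: contra Hj => Hin; rewrite -(H j); apply: map_f.
Qed.

Definition End := Vec -> Vec.
Definition vzero : Vec := MkVec fsupp0.
Definition ezero : End := fun _ => vzero.
Definition eid : End := fun v => v.
Definition eadd (x y : End) : End := fun v => MkVec (fsuppD (vfin (x v)) (vfin (y v))).
Definition escale (c : Kq) (x : End) : End := fun v => MkVec (fsuppZ c (vfin (x v))).
Definition ecomp (x y : End) : End := fun v => x (y v).
Definition esum (xs : seq End) : End := foldr eadd ezero xs.

Definition emono (c : Idx -> Kq) (tau tau' : Idx -> Idx) (H : cancel tau tau') : End :=
  fun v => MkVec (fsupp_mono c H (vfin v)).

Definition shift (k : 'I_r) (d : int) (j : Idx) : Idx :=
  [ffun l => if l == k then j l + d else j l].
Definition shiftall (d : int) (j : Idx) : Idx := [ffun l => j l + d].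

Lemma shiftK k d : cancel (shift k d) (shift k (- d)).
Proof.
move=> j; apply/ffunP => l; rewrite !ffunE; case: eqP => // _.
by rewrite addrK.
Qed.

Lemma shiftallK d : cancel (shiftall d) (shiftall (- d)).
Proof. by move=> j; apply/ffunP => l; rewrite !ffunE addrK. Qed.

Lemma idK : cancel (@id Idx) id.
Proof. by []. Qed.

Definition congr (i : nat) (t : int) : bool := (n%:Z %| t - i%:Z)%Z.
Definition ind (b : bool) : int := if b then 1 else 0.
(* exponent of q in the eigenvalue of K_i K_{i+1}^{-1} on e_t *)
Definition Kt (i : nat) (t : int) : int := ind (congr i t) - ind (congr i.+1 t).

(* Images under psi_{n,r} of the generators, via the iterated coproduct. *)
Definition genK (i : nat) (e : int) : End :=
  emono (fun j => \prod_(l < r) q ^ (e * ind (congr i (j l)))) idK.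
Definition genR : End := emono (fun _ => 1) (shiftallK (-1)).
Definition genRinv : End := emono (fun _ => 1) (shiftallK 1).
(* E_i = sum_k 1^{(x)(k-1)} (x) E_i (x) (K_iK_{i+1}^{-1})^{(x)(r-k)} *)
Definition genE (i : nat) : End :=
  esum [seq emono (fun j => (ind (congr i (j k)))%:~R *
                     \prod_(l < r | (k < l)%N) q ^ Kt i (j l)) (shiftK k 1)
       | k <- enum 'I_r].
(* E_{-i} = sum_k (K_i^{-1}K_{i+1})^{(x)(k-1)} (x) E_{-i} (x) 1^{(x)(r-k)} *)
Definition genF (i : nat) : End :=
  esum [seq emono (fun j => (ind (congr i (j k - 1)))%:~R *
                     \prod_(l < r | (l < k)%N) q ^ (- Kt i (j l))) (shiftK k (-1))
       | k <- enum 'I_r].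

Definition isGen (x : End) : Prop :=
  (exists i : nat, [/\ (0 < i)%N, (i <= n)%N &
      [\/ x = genE i, x = genF i, x = genK i 1 | x = genK i (-1)]])
  \/ x = genR \/ x = genRinv.

(* hat S(n,r) = psi_{n,r}(hat U) = the unital Q(q)-subalgebra of End(V^{(x)r})
   generated by the images of the generators. *)
Inductive inS : End -> Prop :=
| inS_gen x : isGen x -> inS x
| inS_id : inS eid
| inS_add x y : inS x -> inS y -> inS (eadd x y)
| inS_scale c x : inS x -> inS (escale c x)
| inS_mul x y : inS x -> inS y -> inS (ecomp x y).

(* 1_r = 1_lambda, lambda = (1,..,1,0,..,0) (r ones): lambda_{i+1} = [i < r]. *)
Definition one_r : End :=
  emono (fun j => if [forall i : 'I_n,
                        #|[pred l : 'I_r | congr i.+1 (j l)]| == ((i : nat) < r)%N]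
                  then 1 else 0) idK.

Definition corner (x : End) : End := ecomp one_r (ecomp x one_r).

End AffineSchur.

From HB Require Import structures.
From mathcomp Require Import all_boot all_order all_algebra.
From mathcomp Require Import ring zify.
From Stdlib Require Import FunctionalExtensionality Classical.
Import GRing.Theory.
Local Open Scope ring_scope.
Set Implicit Arguments. Unset Strict Implicit.

(* Let S = hat S(n,r) and let J be the two-sided ideal S 1_r S, spanned by the
   products a 1_r b.  The proof has two independent halves.

   1. If 1 lies in J, injectivity on the corner propagates: when f d = 0, every
      1_r b d a 1_r is sent to 0, hence vanishes; by bilinearity z d w = 0 for
      all z, w in J, and z = w = 1 gives d = 0  (injective_of_one_in_ideal).

   2. If r < n then 1 lies in J  (one_in_ideal).  The diagonal part of S contains
      each weight idempotent 1_lambda (interpolating the eigenvalues of the K_i)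
      and 1 is their sum.  If lambda_c > 0 = lambda_(c+1), then
      E_(c+1) 1_mu F_(c+1) 1_lambda = [lambda_c] 1_lambda, where mu moves one box
      from the cell c to the next, so 1_lambda is in J whenever 1_mu is
      (inJ_move).  Using such moves, first removing collisions and then pushing
      boxes towards the cell r-1, every weight reaches (1^r, 0^(n-r)), whose
      idempotent is 1_r.

   Weights are carried by index tuples j : Idx r, whose
   weight counts the entries of j in each residue class mod n. *)

Section Endomorphisms.
Variable r : nat.
Implicit Types (x y z : End r) (u w : Vec r).

Lemma vec_ext u w : (forall j, u j = w j) -> u = w.
Proof.
case: u w => u hu [w hw] /= H.
have E : u = w by apply: functional_extensionality.
by subst w; congr MkVec; apply: proof_irrelevance.
Qed.

Lemma end_ext x y : (forall v j, x v j = y v j) -> x = y.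
Proof. by move=> H; apply: functional_extensionality => v; apply: vec_ext. Qed.

Definition vadd u w : Vec r := MkVec (fsuppD (vfin u) (vfin w)).
Definition vscale (c : Kq) u : Vec r := MkVec (fsuppZ c (vfin u)).

Definition linear_end x : Prop :=
  (forall u w, x (vadd u w) = vadd (x u) (x w)) /\
  (forall c u, x (vscale c u) = vscale c (x u)).

Lemma linear_emono (c : Idx r -> Kq) (tau tau' : Idx r -> Idx r) (H : cancel tau tau') :
  linear_end (emono c H).
Proof.
by split=> [u w|a u]; apply: vec_ext => j /=; rewrite ?mulrDr // mulrCA.
Qed.

Lemma linear_eid : linear_end (@eid r). Proof. by []. Qed.

Lemma linear_ezero : linear_end (@ezero r).
Proof. by split=> *; apply: vec_ext => j /=; rewrite ?addr0 ?mulr0. Qed.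

Lemma linear_eadd x y : linear_end x -> linear_end y -> linear_end (eadd x y).
Proof.
move=> [Dx Zx] [Dy Zy]; split=> [u w|c u]; apply: vec_ext => j /=.
  by rewrite Dx Dy /= addrACA.
by rewrite Zx Zy /= mulrDr.
Qed.

Lemma linear_escale a x : linear_end x -> linear_end (escale a x).
Proof.
move=> [Dx Zx]; split=> [u w|c u]; apply: vec_ext => j /=.
  by rewrite Dx /= mulrDr.
by rewrite Zx /= mulrCA.
Qed.

Lemma linear_ecomp x y : linear_end x -> linear_end y -> linear_end (ecomp x y).
Proof. by move=> [Dx Zx] [Dy Zy]; split=> *; rewrite /ecomp ?Dy ?Dx ?Zy ?Zx. Qed.

Lemma linear_esum (I : Type) (s : seq I) (g : I -> End r) :
  (forall i, linear_end (g i)) -> linear_end (esum [seq g i | i <- s]).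
Proof.
by move=> H; elim: s => [|i s IH] /=; [exact: linear_ezero|exact: linear_eadd].
Qed.

Lemma ecompDr x y z : linear_end x -> ecomp x (eadd y z) = eadd (ecomp x y) (ecomp x z).
Proof. by move=> [Dx _]; apply: functional_extensionality => v; exact: Dx. Qed.

Lemma ecompZr x c y : linear_end x -> ecomp x (escale c y) = escale c (ecomp x y).
Proof. by move=> [_ Zx]; apply: functional_extensionality => v; exact: Zx. Qed.

Lemma eadd0 : eadd (@ezero r) (@ezero r) = @ezero r.
Proof. by apply: end_ext => v j; rewrite /= addr0. Qed.

Lemma escale0 c : escale c (@ezero r) = @ezero r.
Proof. by apply: end_ext => v j; rewrite /= mulr0. Qed.

Lemma ecomp0r x : linear_end x -> ecomp x (@ezero r) = @ezero r.
Proof.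
move=> Lx; rewrite -{1}(escale0 0) ecompZr //; apply: end_ext => v j /=; exact: mul0r.
Qed.

Lemma esum_mapE (I : Type) (s : seq I) (g : I -> End r) (v : Vec r) j :
  esum [seq g i | i <- s] v j = \sum_(i <- s) g i v j.
Proof. by elim: s => [|i s IH]; rewrite ?big_nil ?big_cons //= IH. Qed.

Definition diag (c : Idx r -> Kq) : End r := emono c (@idK r).

Lemma diag_ext (c1 c2 : Idx r -> Kq) : (forall j, c1 j = c2 j) -> diag c1 = diag c2.
Proof. by move=> H; apply: end_ext => v j /=; rewrite H. Qed.

End Endomorphisms.

Section DiagonalPart.
Variables n r : nat.
Notation inS := (@inS n r).

Lemma linear_inS x : inS x -> linear_end x.
Proof.
elim=> {x} [x [[i [_ _ [->|->|->|->]]]|[->|->]]||x y _ ? _ ?|c x _ ?|x y _ ? _ ?];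
  by [apply: linear_esum => k; apply: linear_emono|apply: linear_emono
     |apply: linear_eid|apply: linear_eadd|apply: linear_escale|apply: linear_ecomp].
Qed.

Lemma inS_const a : inS (diag (fun _ => a)).
Proof.
have -> : diag (fun _ => a) = escale a (@eid r) by apply: end_ext.
exact/inS_scale/inS_id.
Qed.

Lemma inS_zero : inS (@ezero r).
Proof.
have -> : @ezero r = diag (fun _ => 0) by apply: end_ext => v j; rewrite /= mul0r.
exact: inS_const.
Qed.

Lemma inS_diagD (c1 c2 : Idx r -> Kq) : inS (diag c1) -> inS (diag c2) ->
  inS (diag (fun j => c1 j + c2 j)).
Proof.
move=> H1 H2; have -> : diag (fun j => c1 j + c2 j) = eadd (diag c1) (diag c2).
  by apply: end_ext => v j; rewrite /= mulrDl.
exact: inS_add.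
Qed.

Lemma inS_diagM (c1 c2 : Idx r -> Kq) : inS (diag c1) -> inS (diag c2) ->
  inS (diag (fun j => c1 j * c2 j)).
Proof.
move=> H1 H2; have -> : diag (fun j => c1 j * c2 j) = ecomp (diag c1) (diag c2).
  by apply: end_ext => v j; rewrite /= mulrA.
exact: inS_mul.
Qed.

Lemma inS_diag_poly (c : Idx r -> Kq) (P : {poly Kq}) :
  inS (diag c) -> inS (diag (fun j => P.[c j])).
Proof.
move=> Hc; elim/poly_ind: P => [|P a IH].
  by rewrite (@diag_ext _ _ (fun _ => 0)) => [|j]; [exact: inS_const|rewrite horner0].
rewrite (@diag_ext _ _ (fun j => P.[c j] * c j + a)) => [|j]; last by rewrite hornerMXaddC.
by apply: inS_diagD; [exact: inS_diagM|exact: inS_const].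
Qed.

Lemma inS_diag_prod (I : Type) (s : seq I) (g : I -> Idx r -> Kq) :
  (forall i, inS (diag (g i))) -> inS (diag (fun j => \prod_(i <- s) g i j)).
Proof.
move=> H; elim: s => [|i s IH].
  by rewrite (@diag_ext _ _ (fun _ => 1)) => [|j]; [exact: inS_const|rewrite big_nil].
rewrite (@diag_ext _ _ (fun j => g i j * \prod_(i <- s) g i j)) => [|j]; last by rewrite big_cons.
exact: inS_diagM.
Qed.

End DiagonalPart.

(* q is transcendental over Q; what is needed is that its powers are nonzero
   and pairwise distinct. *)
Lemma q_neq0 : q != 0.
Proof. by rewrite /q tofrac_eq0 polyX_eq0. Qed.

Lemma qX_inj (a b : nat) : q ^+ a = q ^+ b -> a = b.
Proof.
rewrite /q -!tofracXn => /eqP; rewrite tofrac_eq => /eqP E.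
by have := congr1 (fun p : {poly rat} => size p) E; rewrite !size_polyXn => [[]].
Qed.

Section WeightIdempotents.
Variables n r : nat.
Notation inS := (@inS n r).

(* cnt i j = number of entries of j congruent to i mod n, i.e. the weight of
   e_j at i; K_i acts on e_j by q ^+ cnt i j. *)
Definition cnt (i : nat) (j : Idx r) : nat := #|[pred l : 'I_r | congr n i (j l)]|.

Lemma cnt_le i j : (cnt i j <= r)%N.
Proof. by rewrite /cnt (leq_trans (max_card _)) ?card_ord. Qed.

Lemma genK_diag i : @genK n r i 1 = diag (fun j => q ^+ cnt i j).
Proof.
apply: diag_ext => j; rewrite /cnt -prodr_const (big_mkcond (fun l => congr n i (j l))) /=.
apply: eq_bigr => l _; rewrite mul1r /ind; case: ifP => _; first by rewrite expr1z.
by rewrite expr0z.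
Qed.

(* Interpolating the eigenvalues q^0, ..., q^r of K_i: the projection onto the
   vectors whose weight at i equals a lies in hat S(n,r). *)
Lemma inS_cnt_eq i a : (0 < i <= n)%N -> inS (diag (fun j => ((cnt i j == a) : nat)%:R)).
Proof.
move=> /andP [i_gt0 i_le].
pose P : {poly Kq} := \prod_(b < r.+1 | (b : nat) != a) ('X - (q ^+ b)%:P).
have PE m : P.[q ^+ m] = \prod_(b < r.+1 | (b : nat) != a) (q ^+ m - q ^+ b).
  by rewrite /P horner_prod; apply: eq_bigr => b _; rewrite hornerXsubC.
have Pa : P.[q ^+ a] != 0.
  rewrite PE; apply/prodf_neq0 => b hb; rewrite subr_eq0.
  by apply/eqP => /qX_inj E; move: hb; rewrite E eqxx.
rewrite (@diag_ext _ _ (fun j => (P.[q ^+ a])^-1 * P.[q ^+ cnt i j])) => [|j].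
  apply: inS_diagM; first exact: inS_const.
  apply: inS_diag_poly; rewrite -genK_diag; apply: inS_gen; left.
  by exists i; split=> //; exact: Or43.
case: eqP => [->|ne]; first by rewrite mulVf.
have Hc : (cnt i j < r.+1)%N by rewrite ltnS cnt_le.
rewrite (PE (cnt i j)) (bigD1 (Ordinal Hc)) /=; last exact/eqP.
by rewrite subrr mul0r mulr0.
Qed.

Definition Ind (lam : 'I_n -> nat) : End r :=
  diag (fun j => if [forall c : 'I_n, cnt c.+1 j == lam c] then 1 else 0).

Lemma inS_Ind lam : inS (Ind lam).
Proof.
rewrite /Ind (@diag_ext _ _
  (fun j => \prod_(c <- enum 'I_n) ((cnt c.+1 j == lam c) : nat)%:R)) => [|j].
  by apply: inS_diag_prod => c; apply: inS_cnt_eq; rewrite ltn_ord.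
rewrite big_enum /=; case: forallP => H; first by rewrite big1 // => c _; rewrite H.
have [c Hc] : exists c : 'I_n, cnt c.+1 j != lam c.
  by apply/existsP; rewrite -negb_forall; apply/forallP.
by rewrite (bigD1 c) //= (negbTE Hc) mul0r.
Qed.

Lemma one_rE : @one_r n r = Ind (fun c => ((c : nat) < r)%N). Proof. by []. Qed.

Lemma inS_one_r : inS (@one_r n r).
Proof. rewrite one_rE; exact: inS_Ind. Qed.

(* The weight idempotents sum to the identity (each weight has entries <= r). *)
Lemma eid_sum_Ind :
  @eid r = esum [seq Ind (fun c => val (lam c))
                | lam : {ffun 'I_n -> 'I_r.+1} <- enum {ffun 'I_n -> 'I_r.+1}].
Proof.
apply: end_ext => v j; rewrite esum_mapE big_enum /=.
pose lam0 : {ffun 'I_n -> 'I_r.+1} := [ffun c : 'I_n => inord (cnt c.+1 j)].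
rewrite (bigD1 lam0) //= big1 => [|lam hlam].
  rewrite addr0; case: forallP => [_|H]; first by rewrite mul1r.
  by exfalso; apply: H => c; rewrite ffunE inordK // ltnS cnt_le.
case: forallP => [H|_]; last by rewrite mul0r.
exfalso; move: hlam; apply/negP; rewrite negbK; apply/eqP/ffunP => c.
by apply: ord_inj; rewrite ffunE inordK ?ltnS ?cnt_le // (eqP (H c)).
Qed.

End WeightIdempotents.

Section IdealOfOne.
Variables n r : nat.
Notation inS := (@inS n r).
Notation one := (@one_r n r).

Inductive inJ : End r -> Prop :=
| inJ_gen a b : inS a -> inS b -> inJ (ecomp a (ecomp one b))
| inJ_add x y : inJ x -> inJ y -> inJ (eadd x y)
| inJ_scale c x : inJ x -> inJ (escale c x).

Lemma inJ_zero : inJ (@ezero r).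
Proof.
have <- : ecomp (@ezero r) (ecomp one (@eid r)) = @ezero r by [].
by apply: inJ_gen; [exact: inS_zero|exact: inS_id].
Qed.

Lemma inJ_one_r : inJ one.
Proof.
have <- : ecomp (@eid r) (ecomp one (@eid r)) = one by [].
by apply: inJ_gen; exact: inS_id.
Qed.

Lemma inJ_esum (I : Type) (s : seq I) (g : I -> End r) :
  (forall i, inJ (g i)) -> inJ (esum [seq g i | i <- s]).
Proof. by move=> H; elim: s => [|i s IH] /=; [exact: inJ_zero|exact: inJ_add]. Qed.

Lemma inJ_mull a z : inS a -> inJ z -> inJ (ecomp a z).
Proof.
move=> Ha; have La := linear_inS Ha.
elim=> {z} [a' b Ha' Hb|x y _ Hx _ Hy|c x _ Hx].
- by apply: (@inJ_gen (ecomp a a')) => //; exact: inS_mul.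
- by rewrite ecompDr //; exact: inJ_add.
- by rewrite ecompZr //; exact: inJ_scale.
Qed.

Lemma inJ_mulr a z : inS a -> inJ z -> inJ (ecomp z a).
Proof.
move=> Ha; elim=> {z} [a' b Ha' Hb|x y _ Hx _ Hy|c x _ Hx].
- by apply: (@inJ_gen _ (ecomp b a)) => //; exact: inS_mul.
- exact: inJ_add.
- exact: inJ_scale.
Qed.

Definition corner_null (d : End r) : Prop :=
  forall a b, inS a -> inS b -> corner n (ecomp b (ecomp d a)) = @ezero r.

Section Annihilation.
Variable d : End r.
Hypotheses (Sd : inS d) (Nd : corner_null d).

Lemma corner_null_ideal_r b w : inS b -> inJ w -> ecomp one (ecomp b (ecomp d w)) = @ezero r.
Proof.
move=> Hb Jw; pose X := ecomp one (ecomp b d).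
have L : linear_end X.
  by apply: linear_inS; apply: inS_mul; [exact: inS_one_r|exact: inS_mul].
change (ecomp X w = @ezero r); elim: Jw => {w} [a' b' Ha' Hb'|x y _ Hx _ Hy|c x _ Hx].
- by change (ecomp (corner n (ecomp b (ecomp d a'))) b' = @ezero r); rewrite Nd.
- by rewrite ecompDr // Hx Hy eadd0.
- by rewrite ecompZr // Hx escale0.
Qed.

Lemma corner_null_ideal z w : inJ z -> inJ w -> ecomp z (ecomp d w) = @ezero r.
Proof.
move=> Jz Jw; elim: Jz => {z} [a b Ha Hb|x y _ Hx _ Hy|c x _ Hx].
- change (ecomp a (ecomp one (ecomp b (ecomp d w))) = @ezero r).
  by rewrite corner_null_ideal_r // ecomp0r //; exact: linear_inS Ha.
- by change (eadd (ecomp x (ecomp d w)) (ecomp y (ecomp d w)) = @ezero r); rewrite Hx Hy eadd0.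
- by change (escale c (ecomp x (ecomp d w)) = @ezero r); rewrite Hx escale0.
Qed.

End Annihilation.

Lemma injective_of_one_in_ideal (A : algType Kq) (f : End r -> A) :
  inJ (@eid r) ->
  (forall x y, inS x -> inS y -> f (eadd x y) = f x + f y) ->
  (forall c x, inS x -> f (escale c x) = c *: f x) ->
  (forall x y, inS x -> inS y -> f (ecomp x y) = f x * f y) ->
  (forall x y, inS x -> inS y -> f (corner n x) = f (corner n y) -> corner n x = corner n y) ->
  forall x y, inS x -> inS y -> f x = f y -> x = y.
Proof.
move=> J1 fadd fscale fmul finj x y Sx Sy fxy.
pose d := eadd x (escale (-1) y).
have Sd : inS d by apply: inS_add => //; exact: inS_scale.
have fd : f d = 0 by rewrite fadd ?fscale ?fxy ?scaleN1r ?subrr //; exact: inS_scale.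
have f0 : f (@ezero r) = 0.
  by rewrite -(@escale0 r 0) fscale ?scale0r //; exact: inS_zero.
have Nd : corner_null d.
  move=> a b Sa Sb; have S1 := inS_one_r n r; have S0 := inS_zero n r.
  have Sda : inS (ecomp d a) by exact: inS_mul.
  have Sbda : inS (ecomp b (ecomp d a)) by exact: inS_mul.
  have <- : corner n (@ezero r) = @ezero r by rewrite /corner /= ecomp0r //; exact: linear_inS S1.
  apply: finj => //; rewrite /corner.
  rewrite (fmul _ _ S1 (inS_mul Sbda S1)) (fmul _ _ S1 (inS_mul S0 S1)).
  rewrite (fmul _ _ Sbda S1) (fmul _ _ S0 S1).
  by rewrite (fmul _ _ Sb Sda) (fmul _ _ Sd Sa) fd f0 !(mul0r, mulr0).
apply: end_ext => v j; have := congr1 (fun e : End r => e v j) (corner_null_ideal Sd Nd J1 J1).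
by move=> /= /eqP; rewrite mulN1r subr_eq0 => /eqP.
Qed.

End IdealOfOne.

Section QuantumInteger.
Variable r : nat.
Variable b : nat -> bool.

Lemma prod_exprz (P : pred 'I_r) (e : 'I_r -> int) :
  \prod_(l < r | P l) q ^ e l = q ^ (\sum_(l < r | P l) e l).
Proof.
by rewrite (big_morph (fun m : int => q ^ m) (fun a b => expfzDr a b q_neq0) (expr0z q)).
Qed.

(* For a 0/1-sequence b of length r with m ones, the sum over k of
   [b k] q^(#ones after k) q^(-#ones before k) telescopes to the quantum integer
   (q^m - q^-m) / (q - q^-1).  This is the scalar by which E_i F_i acts. *)
Definition tterm (k : nat) : Kq := (ind (b k))%:~R *
  (\prod_(l < r | (k < l)%N) q ^ ind (b l)) * (\prod_(l < r | (l < k)%N) q ^ (- ind (b l))).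

Definition ones_from (k : nat) : int := \sum_(l < r | (k <= l)%N) ind (b l).
Definition ones_before (k : nat) : int := \sum_(l < r | (l < k)%N) ind (b l).
Definition potential (k : nat) : Kq := q ^ (ones_from k - ones_before k).

Lemma ones_fromS k : (k < r)%N -> ones_from k = ind (b k) + ones_from k.+1.
Proof.
move=> hk; rewrite /ones_from (bigD1 (Ordinal hk)) //=; congr (_ + _).
by apply: eq_bigl => l; rewrite -val_eqE /= ltn_neqAle andbC eq_sym.
Qed.

Lemma ones_beforeS k : (k < r)%N -> ones_before k.+1 = ones_before k + ind (b k).
Proof.
move=> hk; rewrite /ones_before (bigD1 (Ordinal hk)) //= addrC; congr (_ + _).
by apply: eq_bigl => l; rewrite -val_eqE /= ltnS ltn_neqAle andbC.
Qed.

Lemma potential_step k : (k < r)%N -> potential k - potential k.+1 = (q - q^-1) * tterm k.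
Proof.
move=> hk; rewrite /potential /tterm ones_fromS // ones_beforeS // !prod_exprz sumrN.
rewrite -mulrA -(expfzDr _ _ q_neq0) -/(ones_from k.+1) -/(ones_before k).
rewrite /ind; case: (b k) => /=; last by rewrite add0r addr0 subrr mul0r mulr0.
rewrite mulr1z mul1r mulrBl -addrA (expfzDr 1 (ones_from k.+1 - ones_before k) q_neq0).
rewrite expr1z opprD addrA (expfzDr (ones_from k.+1 - ones_before k) (-1) q_neq0).
by rewrite -invr_expz expr1z [q^-1 * _]mulrC.
Qed.

Lemma tterm_sum : (q - q^-1) * \sum_(k < r) tterm k =
  q ^ (\sum_(l < r) ind (b l)) - q ^ (- \sum_(l < r) ind (b l)).
Proof.
rewrite mulr_sumr -(big_mkord xpredT (fun k => (q - q^-1) * tterm k)).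
rewrite (telescope_sumr_eq (fun k => - potential k)) // => [|k /andP [_ hk]]; last first.
  by rewrite -potential_step // opprK addrC.
rewrite /potential /ones_from /ones_before opprK addrC.
have -> : \sum_(l < r | (l < 0)%N) ind (b l) = 0 by rewrite big_pred0.
have -> : \sum_(l < r | (r <= l)%N) ind (b l) = 0.
  by rewrite big_pred0 // => l; rewrite leqNgt ltn_ord.
have -> : \sum_(l < r | (l < r)%N) ind (b l) = \sum_(l < r) ind (b l).
  by apply: eq_bigl => l; rewrite ltn_ord.
by rewrite subr0 sub0r.
Qed.

End QuantumInteger.

Lemma qnum_neq0 (a : nat) : (0 < a)%N -> q ^ (a%:Z) - q ^ (- a%:Z) != 0.
Proof.
move=> ha; rewrite subr_eq0 -invr_expz; apply/eqP => E.
have E' : q ^+ a = (q ^+ a)^-1 by exact: E.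
have : q ^+ (a + a) = q ^+ 0.
  by rewrite exprD {2}E' mulfV ?expr0 // expf_neq0 // q_neq0.
by move/qX_inj; lia.
Qed.

Lemma qden_neq0 : q - q^-1 != 0.
Proof. by have := qnum_neq0 (ltn0Sn 0); rewrite expr1z -invr_expz expr1z. Qed.

Definition ord_from (N t : nat) (x : 'I_(N - t)) : 'I_N.
Proof. refine (@Ordinal N (t + x) _); by rewrite -ltn_subRL ltn_ord. Defined.

Lemma card_final_segment (N t : nat) : #|[set y : 'I_N | (t <= y)%N]| = (N - t)%N.
Proof.
have -> : [set y : 'I_N | (t <= y)%N] = [set @ord_from N t x | x in 'I_(N - t)].
  apply/setP => y; rewrite inE; apply/idP/imsetP => [ty|[x _ ->]]; last exact: leq_addr.
  have hx : (y - t < N - t)%N by have := ltn_ord y; lia.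
  by exists (Ordinal hx) => //; apply: val_inj => /=; rewrite subnKC.
rewrite card_imset ?card_ord // => x y /(congr1 val) /= /eqP.
by rewrite eqn_add2l => /eqP E; apply: val_inj.
Qed.

Lemma succ_closed_final (N : nat) (G : {set 'I_N}) :
  (forall g, g \in G -> (g.+1 < N)%N -> exists2 h, h \in G & val h = g.+1) ->
  G = [set y : 'I_N | (N - #|G| <= y)%N].
Proof.
move=> up; set m := #|G|; have above g : g \in G -> (N - m <= g)%N.
  move=> Gg; have reach s : (s < N - g)%N -> exists2 h, h \in G & val h = (g + s)%N.
    elim: s => [|s IH] hs; first by exists g; rewrite ?addn0.
    have [h Gh hv] := IH (ltnW hs).
    have [h' Gh' hv'] : exists2 h', h' \in G & val h' = h.+1 by apply: up; rewrite // hv; lia.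
    by exists h'; rewrite // hv' hv addnS.
  have sub : [set y : 'I_N | (g <= y)%N] \subset G.
    apply/subsetP => y; rewrite inE => gy; have hy : (y - g < N - g)%N.
      by have := ltn_ord y; lia.
    have [h Gh hv] := reach _ hy; rewrite (_ : y = h) //.
    by apply: val_inj; rewrite hv subnKC.
  have : (#|[set y : 'I_N | (g <= y)%N]| <= m)%N by exact: subset_leq_card.
  by have := ltn_ord g; rewrite card_final_segment; lia.
apply/eqP; rewrite eqEcard card_final_segment; apply/andP; split.
  by apply/subsetP => g Gg; rewrite inE above.
have : (m <= N)%N by rewrite -[X in (_ <= X)%N]card_ord; exact: max_card.
lia.
Qed.

Section WeightCombinatorics.
Variables n r : nat.
Hypothesis n_gt1 : (1 < n)%N.

(* The residue class ("cell") of t in 'I_n, normalised so that the cell c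
   consists of the t congruent to c + 1 mod n, matching the labels 1..n. *)
Definition cellv (t : int) : nat := `|((t - 1) %% n)%Z|%N.

Lemma cellvE t : (cellv t)%:Z = ((t - 1) %% n)%Z.
Proof. by rewrite /cellv gez0_abs // modz_ge0 // eqz_nat -lt0n ltnW. Qed.

Lemma cellv_lt t : (cellv t < n)%N.
Proof. by rewrite -ltz_nat cellvE ltz_pmod // ltz_nat ltnW. Qed.

Definition cell (t : int) : 'I_n := Ordinal (cellv_lt t).

Lemma congrE (i : nat) (t : int) : congr n i.+1 t = (cellv t == i %% n)%N.
Proof.
rewrite /congr -eqz_nat cellvE -modz_nat eqz_mod_dvd.
by congr (_ %| _)%Z; rewrite -addn1 PoszD; ring.
Qed.

Lemma congr_cell (c : 'I_n) t : congr n c.+1 t = (cell t == c).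
Proof. by rewrite congrE modn_small. Qed.

Lemma congr_cellS (c : 'I_n) t : congr n c.+2 t = (cell t == ordS c).
Proof. by rewrite congrE. Qed.

Lemma cellS t : cell (t + 1) = ordS (cell t).
Proof.
apply: val_inj => /=; apply/eqP.
by rewrite -eqz_nat -modz_nat -addn1 PoszD !cellvE modzDml addrK subrK.
Qed.

Lemma congr_cellP (c : 'I_n) t : congr n c.+1 (t - 1) = (cell t == ordS c).
Proof.
rewrite congr_cell; have -> : t = (t - 1) + 1 by rewrite subrK.
by rewrite cellS (inj_eq (@ordS_inj n)) subrK.
Qed.

Lemma ordS_neq (c : 'I_n) : ordS c != c.
Proof.
apply/eqP => /(congr1 val) /=; case: (ltnP c.+1 n) => h.
  by rewrite modn_small // => /eqP; rewrite eqn_leq ltnn.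
have Hcn : c.+1 = n by apply/eqP; rewrite eqn_leq h ltn_ord.
by rewrite Hcn modnn => E; move: n_gt1; rewrite -Hcn -E.
Qed.

Lemma iter_ordS_val t (c : 'I_n) : val (iter t (@ordS n) c) = ((c + t) %% n)%N.
Proof.
elim: t => [|t IH]; first by rewrite addn0 modn_small.
by rewrite iterS /= IH -addn1 modnDml addn1 addnS.
Qed.

Lemma iter_ordS_inj a b (c : 'I_n) : (a < n)%N -> (b < n)%N ->
  iter a (@ordS n) c = iter b (@ordS n) c -> a = b.
Proof.
move=> ha hb /(congr1 val); rewrite !iter_ordS_val => /eqP.
by rewrite eqn_modDl !modn_small // => /eqP.
Qed.

Definition cc (c : 'I_n) (j : Idx r) : nat := #|[pred l : 'I_r | cell (j l) == c]|.
Definition wteq (j j0 : Idx r) : bool := [forall c, cc c j == cc c j0].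

Definition IndJ (j0 : Idx r) : End r := diag (fun j => if wteq j j0 then 1 else 0).

Lemma cnt_cc (c : 'I_n) j : cnt n c.+1 j = cc c j.
Proof. by apply: eq_card => l; rewrite !inE congr_cell. Qed.

Lemma IndJ_Ind j0 : IndJ j0 = @Ind n r (fun c => cc c j0).
Proof.
apply: diag_ext => j; rewrite /wteq; congr (if _ then _ else _).
by apply: eq_forallb => c; rewrite cnt_cc.
Qed.

Lemma inS_IndJ j0 : inS n (IndJ j0).
Proof. rewrite IndJ_Ind; exact: inS_Ind. Qed.

Lemma wteq_cc (j j0 : Idx r) c : wteq j j0 -> cc c j = cc c j0.
Proof. by move=> /forallP /(_ c) /eqP. Qed.

Lemma cc0 (d : 'I_n) j l : cc d j = 0%N -> cell (j l) != d.
Proof. by move=> /card0_eq /(_ l); rewrite !inE => ->. Qed.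

Lemma cc0_intro (d : 'I_n) (j : Idx r) : (forall l, cell (j l) != d) -> cc d j = 0%N.
Proof. by move=> H; apply: eq_card0 => l; rewrite !inE (negbTE (H l)). Qed.

Lemma shiftE (k : 'I_r) d (j : Idx r) l : shift k d j l = if l == k then j l + d else j l.
Proof. by rewrite ffunE. Qed.

Lemma cc_shift (c : 'I_n) (k : 'I_r) j :
  (cc c (shift k 1 j) + (cell (j k) == c) = cc c j + (ordS (cell (j k)) == c))%N.
Proof.
rewrite /cc (cardD1 k) [in RHS](cardD1 k) !inE shiftE eqxx cellS.
have -> : #|[predD1 [pred l : 'I_r | cell (shift k 1 j l) == c] & k]| =
          #|[predD1 [pred l : 'I_r | cell (j l) == c] & k]|.
  by apply: eq_card => l; rewrite !inE shiftE; case: eqP.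
set a := nat_of_bool (ordS _ == c); set b := nat_of_bool (cell _ == c); set X := #|_|; lia.
Qed.

Lemma wteq_shift (j j0 : Idx r) (k k0 : 'I_r) : cell (j k) = cell (j0 k0) ->
  wteq (shift k 1 j) (shift k0 1 j0) = wteq j j0.
Proof.
move=> E; apply: eq_forallb => c.
have H1 := cc_shift c k j; have H2 := cc_shift c k0 j0; rewrite E in H1.
apply/eqP/eqP => H.
  by apply/eqP; rewrite -(eqn_add2r (ordS (cell (j0 k0)) == c)) -H1 -H2 H.
by apply/eqP; rewrite -(eqn_add2r (cell (j0 k0) == c)) H1 H2 H.
Qed.

Lemma sum_ind (P : pred 'I_r) : \sum_(l < r) ind (P l) = (#|P|)%:Z.
Proof.
rewrite -sum1_card (big_mkcond P) /= (big_morph Posz PoszD (erefl (Posz 0%N))).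
by apply: eq_bigr => l _; rewrite /ind; case: (P l).
Qed.

(* Let j0 have an entry k0 in the cell c whose successor cell
   is empty.  Then E_{c+1} 1_mu F_{c+1} 1_lambda = [lambda_c] 1_lambda, where
   lambda is the weight of j0 and mu the weight of j0 with the entry k0 shifted
   by one; hence 1_lambda lies in J whenever 1_mu does. *)
Section Move.
Variables (j0 : Idx r) (k0 : 'I_r).
Let c := cell (j0 k0).
Hypothesis next_empty : cc (ordS c) j0 = 0%N.

Definition coefE (k : 'I_r) (j : Idx r) : Kq := (ind (congr n c.+1 (j k)))%:~R *
  \prod_(l < r | (k < l)%N) q ^ Kt n c.+1 (j l).
Definition coefF (k : 'I_r) (j : Idx r) : Kq := (ind (congr n c.+1 (j k - 1)))%:~R *
  \prod_(l < r | (l < k)%N) q ^ (- Kt n c.+1 (j l)).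

Lemma genE_E (v : Vec r) j : @genE n r c.+1 v j = \sum_(k < r) coefE k j * v (shift k 1 j).
Proof. by rewrite /genE esum_mapE big_enum. Qed.

Lemma genF_E (v : Vec r) j : @genF n r c.+1 v j = \sum_(k < r) coefF k j * v (shift k (-1) j).
Proof. by rewrite /genF esum_mapE big_enum. Qed.

(* On the weight space of j0, only the diagonal terms k' = k of E F survive,
   since F can only raise entries into the (empty) cell c + 1. *)
Lemma EF_point (v : Vec r) j :
  ecomp (@genE n r c.+1) (ecomp (IndJ (shift k0 1 j0)) (ecomp (@genF n r c.+1) (IndJ j0))) v j
  = (if wteq j j0 then 1 else 0) * (\sum_(k < r) coefE k j * coefF k (shift k 1 j)) * v j.
Proof.
rewrite /ecomp genE_E mulr_sumr mulr_suml; apply: eq_bigr => k _ /=; rewrite genF_E.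
have [hk|hk] := eqVneq (cell (j k)) c; last first.
  by rewrite /coefE congr_cell (negbTE hk) /= !mul0r mulr0 mul0r.
rewrite wteq_shift //; case Hw: (wteq j j0); last by rewrite !mul0r mulr0.
rewrite (bigD1 k) //= big1 => [|k' hk']; first by rewrite shiftK Hw !mul1r addr0 mulrA.
have e' : cc (ordS c) j = 0%N by rewrite (wteq_cc _ Hw).
by rewrite /coefF shiftE (negbTE hk') congr_cellP (negbTE (cc0 k' e')) /= !mul0r.
Qed.

Definition in_cell (j : Idx r) (m : nat) : bool :=
  if insub m is Some l then cell (j (l : 'I_r)) == c else false.

Lemma in_cellE j (l : 'I_r) : in_cell j l = (cell (j l) == c).
Proof. by rewrite /in_cell valK. Qed.

Lemma EF_coef_tterm j : wteq j j0 ->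
  \sum_(k < r) coefE k j * coefF k (shift k 1 j) = \sum_(k < r) tterm r (in_cell j) k.
Proof.
move=> Hw; have e' : cc (ordS c) j = 0%N by rewrite (wteq_cc _ Hw).
have Kt_E l : Kt n c.+1 (j l) = ind (in_cell j l).
  by rewrite /Kt congr_cell congr_cellS (negbTE (cc0 l e')) in_cellE /ind subr0.
apply: eq_bigr => k _; rewrite /coefE /coefF /tterm shiftE eqxx addrK congr_cell -in_cellE.
rewrite (eq_bigr (fun l : 'I_r => q ^ ind (in_cell j l))) => [|l _]; last by rewrite Kt_E.
have -> : \prod_(l < r | (l < k)%N) q ^ (- Kt n c.+1 (shift k 1 j l)) =
    \prod_(l < r | (l < k)%N) q ^ (- ind (in_cell j l)).
  apply: eq_bigr => l hl; rewrite shiftE.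
  have -> : (l == k) = false by apply/eqP => E; move: hl; rewrite E ltnn.
  by rewrite Kt_E.
by rewrite /ind; case: (in_cell j k) => /=; rewrite ?mulr1z ?mul1r ?mul0r.
Qed.

Lemma EF_IndJ : ecomp (@genE n r c.+1) (ecomp (IndJ (shift k0 1 j0))
    (ecomp (@genF n r c.+1) (IndJ j0)))
  = escale ((q ^ ((cc c j0)%:Z) - q ^ (- (cc c j0)%:Z)) / (q - q^-1)) (IndJ j0).
Proof.
apply: end_ext => v j; rewrite EF_point /=.
case Hw: (wteq j j0); last by rewrite !mul0r mulr0.
rewrite EF_coef_tterm // -(mulKf qden_neq0 (\sum_(k < r) tterm r (in_cell j) k)) tterm_sum.
rewrite sum_ind -(wteq_cc c Hw) /cc.
have -> : #|[pred l : 'I_r | in_cell j l]| = #|[pred l : 'I_r | cell (j l) == c]|.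
  by apply: eq_card => l; rewrite !inE in_cellE.
by rewrite !mul1r [_^-1 * _]mulrC.
Qed.

Lemma inJ_move_cell : inJ n (IndJ (shift k0 1 j0)) -> inJ n (IndJ j0).
Proof.
move=> H.
have SE : inS n (@genE n r c.+1).
  by apply: inS_gen; left; exists c.+1; split; [by []|exact: ltn_ord|exact: Or41].
have SF : inS n (@genF n r c.+1).
  by apply: inS_gen; left; exists c.+1; split; [by []|exact: ltn_ord|exact: Or42].
have a0 : (0 < cc c j0)%N by apply/card_gt0P; exists k0; rewrite inE.
set s := (q ^ ((cc c j0)%:Z) - q ^ (- (cc c j0)%:Z)) / (q - q^-1).
have s0 : s != 0 by rewrite mulf_neq0 ?invr_neq0 ?qnum_neq0 ?qden_neq0.
have -> : IndJ j0 = escale s^-1 (escale s (IndJ j0)).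
  by apply: end_ext => v j; rewrite /= mulKf.
apply: inJ_scale; rewrite -EF_IndJ; apply: inJ_mull => //.
by apply: inJ_mulr => //; apply: inS_mul => //; exact: inS_IndJ.
Qed.

End Move.

Lemma inJ_move (j : Idx r) (k : 'I_r) : (forall l, cell (j l) != ordS (cell (j k))) ->
  inJ n (IndJ (shift k 1 j)) -> inJ n (IndJ j).
Proof. by move=> H; apply: inJ_move_cell; apply: cc0_intro. Qed.

(* Collisions of j: ordered pairs of distinct positions lying in the same cell.
   The target weight (1^r, 0^(n-r)) is collision free. *)
Definition colset (j : Idx r) : {set 'I_r * 'I_r} :=
  [set x | (x.1 != x.2) && (cell (j x.1) == cell (j x.2))].
Definition col (j : Idx r) : nat := #|colset j|.

Lemma col_shift (j : Idx r) (k : 'I_r) :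
  (forall l, cell (j l) != ordS (cell (j k))) ->
  (col (shift k 1 j) <= col j)%N /\
  ((exists2 l, l != k & cell (j l) = cell (j k)) -> (col (shift k 1 j) < col j)%N).
Proof.
move=> He.
have nk x : x \in colset (shift k 1 j) -> (x.1 != k) && (x.2 != k).
  case: x => a b; rewrite inE /= !shiftE => /andP [ab].
  case: (eqVneq a k) => [ea|ak]; case: (eqVneq b k) => [eb|bk] //.
  - by move: ab; rewrite ea eb eqxx.
  - by rewrite ea cellS eq_sym (negbTE (He b)).
  - by rewrite eb cellS (negbTE (He a)).
have sub : colset (shift k 1 j) \subset colset j.
  apply/subsetP => x hx; have /andP [h1 h2] := nk x hx; move: hx.
  by rewrite !inE !shiftE (negbTE h1) (negbTE h2).
split; first exact: subset_leq_card.
move=> [l lk El]; apply: proper_card; apply/properP; split => //.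
exists (k, l); first by rewrite inE /= eq_sym lk El eqxx.
by apply/negP => /nk /=; rewrite eqxx.
Qed.

(* Collision removal along a chain: if the cell c holds two entries, the cells
   c+1, ..., c+m-1 are occupied and c+m is empty, then moving the last box of
   the chain forward (and recursing) yields a tuple with fewer collisions whose
   idempotent controls that of j. *)
Lemma collision_chain m : forall (j : Idx r) (c : 'I_n), (m < n)%N ->
  (exists k1 k2, [/\ k1 != k2, cell (j k1) = c & cell (j k2) = c]) ->
  (forall t, (0 < t < m)%N -> exists l, cell (j l) = iter t (@ordS n) c) ->
  (forall l, cell (j l) != iter m (@ordS n) c) ->
  exists j', (col j' < col j)%N /\ (inJ n (IndJ j') -> inJ n (IndJ j)).
Proof.
elim: m => [|[|m] IH] j c hm [k1 [k2 [k12 h1 h2]]] hocc hemp.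
- by move: (hemp k1); rewrite /= h1 eqxx.
- have He l : cell (j l) != ordS (cell (j k1)) by rewrite h1; exact: hemp.
  exists (shift k1 1 j); split; last exact: inJ_move.
  by apply: (proj2 (col_shift He)); exists k2; rewrite 1?eq_sym // h1 h2.
set d := iter m.+1 (@ordS n) c.
have [k hk] : exists l, cell (j l) = d by apply: hocc; rewrite /= ltnSn.
have He l : cell (j l) != ordS (cell (j k)) by rewrite hk; exact: hemp.
have [cle clt] := col_shift He.
have [/existsP [l /andP [lk /eqP El]]|/existsPn Hno] :=
  boolP [exists l, (l != k) && (cell (j l) == d)].
  by exists (shift k 1 j); split; [apply: clt; exists l; rewrite // El hk|exact: inJ_move].
have dc : d != c.
  by apply/eqP => /(@iter_ordS_inj m.+1 0 c (ltnW hm) (ltn_trans (ltn0Sn _) hm)).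
have k1k : k1 != k by apply/eqP => E; move: dc; rewrite -hk -E h1 eqxx.
have k2k : k2 != k by apply/eqP => E; move: dc; rewrite -hk -E h2 eqxx.
have [j'' [lt'' J'']] : exists j', (col j' < col (shift k 1 j))%N /\
    (inJ n (IndJ j') -> inJ n (IndJ (shift k 1 j))).
  apply: (IH _ c (ltnW hm)).
  - by exists k1, k2; rewrite !shiftE (negbTE k1k) (negbTE k2k).
  - move=> t /andP [t0 tm]; have [l hl] : exists l, cell (j l) = iter t (@ordS n) c.
      by apply: hocc; rewrite t0 ltnS ltnW.
    exists l; rewrite shiftE; case: eqP => [E|_] //.
    have := @iter_ordS_inj t m.+1 c (ltn_trans tm (ltnW hm)) (ltnW hm).
    by rewrite -/d -hk -hl E => /(_ erefl) tE; move: tm; rewrite tE ltnn.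
  - move=> l; rewrite shiftE; case: (eqVneq l k) => [->|lk].
      by rewrite cellS hk ordS_neq.
    by have := Hno l; rewrite lk.
by exists j''; split; [exact: leq_trans lt'' cle|move=> /J''; exact: inJ_move].
Qed.

Hypothesis r_lt_n : (r < n)%N.

Lemma exists_empty_cell (j : Idx r) : exists e : 'I_n, forall l, cell (j l) != e.
Proof.
have [/existsP [e /forallP He]|/existsPn H] :=
  boolP [exists e : 'I_n, [forall l, cell (j l) != e]]; first by exists e.
have sub : [set: 'I_n] \subset [set cell (j l) | l in 'I_r].
  apply/subsetP => e _; have := H e; rewrite negb_forall => /existsP [l].
  by rewrite negbK => /eqP <-; apply: imset_f.
have := leq_trans (subset_leq_card sub) (leq_imset_card _ _).
by rewrite cardsT !card_ord leqNgt r_lt_n.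
Qed.

Lemma reduce_collisions (j : Idx r) : (0 < col j)%N ->
  exists j', (col j' < col j)%N /\ (inJ n (IndJ j') -> inJ n (IndJ j)).
Proof.
move=> /card_gt0P [[k1 k2]]; rewrite inE /= => /andP [k12 /eqP h12].
set c := cell (j k1).
have [e He] := exists_empty_cell j.
pose t0 := ((e + n - c) %% n)%N.
have t0E : iter t0 (@ordS n) c = e.
  apply: val_inj; rewrite iter_ordS_val /t0 modnDmr addnBA; last first.
    exact: leq_trans (ltnW (ltn_ord c)) (leq_addl _ _).
  by rewrite addKn modnDr modn_small.
have t0n : (t0 < n)%N by rewrite ltn_pmod // ltnW.
have t0p : (0 < t0)%N by rewrite lt0n; apply/eqP => E; move: (He k1); rewrite -t0E E eqxx.
pose P t := (0 < t)%N && [forall l, cell (j l) != iter t (@ordS n) c].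
have exP : exists t, P t.
  by exists t0; rewrite /P t0p /=; apply/forallP => l; rewrite t0E.
case: (ex_minnP exP) => m /andP [m0 /forallP Pm] minm.
have mt0 : (m <= t0)%N by apply: minm; rewrite /P t0p; apply/forallP => l; rewrite t0E.
apply: (@collision_chain m j c); [exact: leq_ltn_trans mt0 t0n|by exists k1, k2| |exact: Pm].
move=> t /andP [t0' tm].
have [H|] := boolP [forall l, cell (j l) != iter t (@ordS n) c].
  by have := minm t; rewrite /P t0' H leqNgt tm => /(_ erefl).
by rewrite negb_forall => /existsP [l]; rewrite negbK => /eqP El; exists l.
Qed.

Hypothesis r_gt0 : (0 < r)%N.

(* The rotation of the cells making the cell r-1 (the last occupied cell of
   the target weight) the largest: r, ..., n-1, 0, ..., r-1 become 0, ..., n-1.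
   Moves out of cells other than r-1 increase the rotated cell by one. *)
Definition rot (d : 'I_n) : nat := if (d < r)%N then (d + (n - r))%N else (d - r)%N.

Lemma rot_lt d : (rot d < n)%N.
Proof. by have := ltn_ord d; rewrite /rot; case: ifPn => h; lia. Qed.

Definition rotO (d : 'I_n) : 'I_n := Ordinal (rot_lt d).

Lemma rotO_inj : injective rotO.
Proof.
move=> d1 d2 /(congr1 val) /=; rewrite /rot => E; apply: val_inj => /=.
by have := ltn_ord d1; have := ltn_ord d2; move: E; do 2 case: ifPn => ?; lia.
Qed.

Lemma rot_ordS (d : 'I_n) : (d : nat) != r.-1 -> rot (ordS d) = (rot d).+1.
Proof.
move=> /eqP hd; rewrite /rot /=; have := ltn_ord d.
case: (ltnP d.+1 n) => h1 h2.
  by rewrite modn_small //; do 2 case: ifPn => ?; lia.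
have -> : d.+1 = n by lia.
by rewrite modnn /=; do 2 case: ifPn => ?; lia.
Qed.

Definition rotsum (j : Idx r) : nat := \sum_(l < r) rot (cell (j l)).

Lemma rotsum_le (j : Idx r) : (rotsum j <= n * r)%N.
Proof.
rewrite /rotsum (@leq_trans (\sum_(l < r) n)) //; last by rewrite sum_nat_const card_ord mulnC.
by apply: leq_sum => l _; exact: ltnW (rot_lt _).
Qed.

Lemma rotsum_shift (j : Idx r) (k : 'I_r) : (cell (j k) : nat) != r.-1 ->
  rotsum (shift k 1 j) = (rotsum j).+1.
Proof.
move=> hk; rewrite /rotsum (bigD1 k) //= [in RHS](bigD1 k) //= shiftE eqxx cellS rot_ordS //.
by rewrite addSn; congr (_ + _)%N.+1; apply: eq_bigr => l lk; rewrite shiftE (negbTE lk).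
Qed.

(* A collision-free tuple in which every occupied cell other than r-1 is
   followed by an occupied cell has the target weight (1^r, 0^(n-r)): after
   rotation its cells form a successor-closed set of size r. *)
Lemma target_weight (j : Idx r) : col j = 0%N ->
  (forall k, (cell (j k) : nat) != r.-1 -> exists l, cell (j l) = ordS (cell (j k))) ->
  forall c : 'I_n, cc c j = (c < r)%N.
Proof.
move=> col0 up.
have inj : injective (fun l => cell (j l)).
  move=> a b E; apply/eqP; apply/negPn/negP => ab.
  have : (0 < col j)%N by apply/card_gt0P; exists (a, b); rewrite inE /= ab E eqxx.
  by rewrite col0.
pose G := [set rotO (cell (j l)) | l in 'I_r].
have cardG : #|G| = r by rewrite card_imset ?card_ord // => a b /rotO_inj /inj.
have GE : G = [set y : 'I_n | (n - r <= y)%N].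
  rewrite -[in RHS]cardG; apply: succ_closed_final => g /imsetP [a _ ->] ha.
  have ne : (cell (j a) : nat) != r.-1.
    by apply/eqP => E; move: ha; rewrite /= /rot E; case: ifPn => ?; lia.
  have [b hb] := up a ne; exists (rotO (cell (j b))); first exact: imset_f.
  by rewrite /= hb rot_ordS.
have memG c : (rotO c \in G) = (c < r)%N.
  rewrite GE inE /= /rot; have := ltn_ord c.
  by case: ifPn => hc ?; [apply/idP; lia|apply/negbTE; rewrite -ltnNge; lia].
move=> c; case: (ltnP c r) => hc /=.
  have /imsetP [l _ /rotO_inj El] : rotO c \in G by rewrite memG hc.
  apply: (@eq_card1 _ l) => l'; rewrite !inE; apply/eqP/eqP => [E|->] //.
  by apply: inj; rewrite /= E El.
apply: cc0_intro => l; apply/eqP => El.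
have Gl : rotO (cell (j l)) \in G by apply: imset_f.
by move: Gl; rewrite memG El ltnNge hc.
Qed.

(* Induction on
   col j * (n r + 1) + (n r - rotsum j): collisions are removed first; a
   collision-free tuple either has the target weight, whose idempotent is 1_r,
   or admits a move out of a cell other than r-1 into an empty cell, which keeps
   it collision free and increases rotsum. *)
Lemma IndJ_in_ideal (j : Idx r) : inJ n (IndJ j).
Proof.
pose N := (n * r).+1; pose M (j : Idx r) := (col j * N + (n * r - rotsum j))%N.
suff H m (j' : Idx r) : (M j' < m)%N -> inJ n (IndJ j') by exact: (H (M j).+1).
elim: m j' => [//|m IH] {}j hm.
have [col0|colp] := posnP (col j); last first.
  have [j' [lt' J']] := reduce_collisions colp; apply/J'/IH.
  have hA : ((col j').+1 * N <= col j * N)%N by rewrite leq_mul2r lt' orbT.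
  have := rotsum_le j'; move: hm hA; rewrite /M mulSn /N; lia.
have [/existsP [k /andP [hk /forallP He]]|/existsPn Hno] := boolP [exists k,
    ((cell (j k) : nat) != r.-1) && [forall l, cell (j l) != ordS (cell (j k))]].
  apply: (inJ_move He); apply: IH.
  have c0 : col (shift k 1 j) = 0%N by have := proj1 (col_shift He); rewrite col0; lia.
  have := rotsum_le (shift k 1 j); move: hm.
  by rewrite /M c0 col0 !mul0n !add0n rotsum_shift //; lia.
suff -> : IndJ j = @one_r n r by exact: inJ_one_r.
rewrite IndJ_Ind one_rE; congr Ind; apply: functional_extensionality => c.
apply: target_weight => // k hk; have := Hno k; rewrite hk /= negb_forall.
by move=> /existsP [l]; rewrite negbK => /eqP El; exists l.
Qed.

(* Hence 1 = sum of the weight idempotents lies in J (a weight that is not the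
   weight of any tuple has zero idempotent). *)
Lemma one_in_ideal : inJ n (@eid r).
Proof.
rewrite (eid_sum_Ind n); apply: inJ_esum => lam.
have [[j0 Hj0]|none] := classic (exists j0 : Idx r, forall c : 'I_n, cnt n c.+1 j0 = lam c).
  suff -> : Ind (fun c => val (lam c)) = IndJ j0 by exact: IndJ_in_ideal.
  apply: diag_ext => j; rewrite /wteq; congr (if _ then _ else _).
  by apply: eq_forallb => c; rewrite -!cnt_cc Hj0.
suff -> : Ind (fun c => val (lam c)) = @ezero r by exact: inJ_zero.
apply: end_ext => v j /=; case: forallP => [Hj|_]; last by rewrite mul0r.
by case: none; exists j => c; apply/eqP; exact: Hj.
Qed.

End WeightCombinatorics.

Theorem proposition3p9 (n r : nat) (hn : (3 <= n)%N) (hr : (3 <= r)%N) (hnr : (r < n)%N)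
  (A : algType Kq) (f : End r -> A)
  (fadd : forall x y, inS n x -> inS n y -> f (eadd x y) = f x + f y)
  (fscale : forall c x, inS n x -> f (escale c x) = c *: f x)
  (fmul : forall x y, inS n x -> inS n y -> f (ecomp x y) = f x * f y)
  (fone : f (@eid r) = 1)
  (fsurj : forall a : A, exists2 x, inS n x & f x = a)
  (finj : forall x y, inS n x -> inS n y ->
            f (corner n x) = f (corner n y) -> corner n x = corner n y) :
  forall x y, inS n x -> inS n y -> f x = f y -> x = y.
Proof.
have n_gt1 : (1 < n)%N by lia.
have r_gt0 : (0 < r)%N by lia.
exact: injective_of_one_in_ideal (one_in_ideal n_gt1 hnr r_gt0) fadd fscale fmul finj.
Qed.
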